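(* Define $g:\mathbb N\to\mathbb N$ by $$g(n)=\begin{cases}\lfloor\varphi n\rfloor, & n\in R_{2,0},\\ \lfloor\varphi n-2\rfloor, & n\in R_{1,0},\\ \lfloor(\varphi-1) n+2\rfloor, & n\in R_{2,2},\\ \lfloor(\varphi-1) n+1\rfloor, & n\in R_{3,1}.\end{cases}$$ Then $g$ is an $R_{i,j}$-permutation of $\mathbb N$ of order $2$ (a bijection of $\mathbb N$ with $g\circ g=\mathrm{id}\neq g$). Its first values are $2,1,4,3,6,5,9,12,7,14,\dots$.
   Context: $\mathbb N=\{1,2,\dots\}$, $\varphi=\frac{1+\sqrt5}{2}$, $F$ the Fibonacci numbers ($F(0)=0,F(1)=F(2)=1$). For $i\in\mathbb Z^{\ge0},j\in\mathbb Z$, $R_{i,j}$ is the range of $n\mapsto F(i+1)\lfloor n\varphi\rfloor+F(i)n-j$, $n\in\mathbb N$. An $R_{i,j}$-permutation is a permutation $\pi$ of $\mathbb N$ defined piecewise on a finite partition of $\mathbb N$ into sets $R_{i,j}$, with $\pi(n)=\lfloor(a\varphi+b)n+c\rfloor$ on each piece for integers $a,b,c$ depending on the piece. *)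

From Stdlib Require Import Reals ZArith.
Open Scope R_scope.

Definition phi : R := (1 + sqrt 5) / 2.

(* floor of a real number: Int_part x = up x - 1 is the floor of x *)
Definition rfloor (x : R) : Z := Int_part x.

(* Fibonacci numbers, F 0 = 0, F 1 = F 2 = 1 *)
Fixpoint fib (n : nat) : nat :=
  match n with
  | O => O
  | S m => match m with
           | O => 1%nat
           | S k => (fib m + fib k)%nat
           end
  end.

(* R_{i,j} = range of n |-> F(i+1) floor(n phi) + F(i) n - j, n >= 1,
   as a predicate on Z *)
Definition Rij (i : nat) (j : Z) (m : Z) : Prop :=
  exists n : nat, (1 <= n)%nat /\
    m = (Z.of_nat (fib (i + 1)) * rfloor (INR n * phi)
         + Z.of_nat (fib i) * Z.of_nat n - j)%Z.

(* the positive integers N = {1,2,...} as a predicate on Z *)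
Definition posZ (m : Z) : Prop := (0 < m)%Z.

From Stdlib Require Import Reals ZArith Lra Lia.
Open Scope R_scope.

(* Let A n = floor(n phi) and B n = floor(n phi^2) = A n + n be the lower and upper
   Wythoff sequences.  As phi is irrational and 1/phi + 1/phi^2 = 1, Beatty's theorem
   says that A and B partition the positive integers.  By the identities
   A (A n) = B n - 1 and A (B n) = A n + B n, the four pieces are R_{1,0} = B(N),
   R_{2,0} = A(B(N)), R_{2,2} = A(A(A(N))) and R_{3,1} = A(A(B(N))); splitting N into
   B(N) and A(N), then A(N) into A(B(N)) and A(A(N)), and so on, shows that they
   partition N.  On them floor(phi m) = A m and floor((phi - 1) A j) = j - 1, so g
   swaps B n with A(A(A n)) and A(B n) with A(A(B n)). *)

Lemma rfloor_spec x : IZR (rfloor x) <= x < IZR (rfloor x) + 1.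
Proof. unfold rfloor. pose proof (base_Int_part x). lra. Qed.

Lemma rfloor_unique k x : IZR k <= x < IZR k + 1 -> rfloor x = k.
Proof. intros Hx. symmetry. apply Int_part_spec. lra. Qed.

Lemma rfloor_ge k x : IZR k <= x -> (k <= rfloor x)%Z.
Proof.
  intros Hx. pose proof (rfloor_spec x).
  enough (k < rfloor x + 1)%Z by lia.
  apply lt_IZR. rewrite plus_IZR. lra.
Qed.

Lemma rfloor_lt x : (forall k, x <> IZR k) -> IZR (rfloor x) < x.
Proof.
  intros Hx. destruct (rfloor_spec x) as [[Hlt|Heq] _]; [exact Hlt|].
  exfalso. exact (Hx _ (eq_sym Heq)).
Qed.

Lemma rfloor_add_IZR x k : rfloor (x + IZR k) = (rfloor x + k)%Z.
Proof. apply rfloor_unique. rewrite plus_IZR. pose proof (rfloor_spec x). lra. Qed.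

Lemma rfloor_sub_IZR x k : rfloor (x - IZR k) = (rfloor x - k)%Z.
Proof. unfold Rminus. rewrite <- opp_IZR, rfloor_add_IZR. lia. Qed.

Lemma lt_mul_inv_iff a b c : 0 < c -> (a < b * / c <-> a * c < b).
Proof.
  intros Hc. split; intros H.
  - apply (Rmult_lt_compat_r c) in H; [|exact Hc].
    now rewrite Rmult_assoc, Rinv_l, Rmult_1_r in H by lra.
  - apply (Rmult_lt_reg_r c); [exact Hc|].
    now rewrite Rmult_assoc, Rinv_l, Rmult_1_r by lra.
Qed.

Lemma mul_inv_lt_iff a b c : 0 < c -> (a * / c < b <-> a < b * c).
Proof.
  intros Hc. split; intros H.
  - apply (Rmult_lt_compat_r c) in H; [|exact Hc].
    now rewrite Rmult_assoc, Rinv_l, Rmult_1_r in H by lra.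
  - apply (Rmult_lt_reg_r c); [exact Hc|].
    now rewrite Rmult_assoc, Rinv_l, Rmult_1_r by lra.
Qed.

Definition irrational (x : R) : Prop := forall n : Z, (0 < n)%Z -> forall k : Z, IZR n * x <> IZR k.

Lemma irrational_inv x : 0 < x -> irrational x -> irrational (/ x).
Proof.
  intros Hx Hirr n Hn k E.
  assert (Hk : (0 < k)%Z).
  { apply lt_IZR. rewrite <- E.
    apply Rmult_lt_0_compat; [now apply IZR_lt | now apply Rinv_0_lt_compat]. }
  apply (Hirr k Hk n). rewrite <- E. field. lra.
Qed.

Definition beatty (x : R) (n : Z) : Z := rfloor (IZR n * x).

Lemma beatty_bounds x n : (forall k, IZR n * x <> IZR k) ->
  IZR (beatty x n) < IZR n * x < IZR (beatty x n) + 1.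
Proof. intros Hx. split; [now apply rfloor_lt | apply rfloor_spec]. Qed.

Lemma beatty_lt_mono x n n' : 1 <= x -> (n < n')%Z -> (beatty x n < beatty x n')%Z.
Proof.
  intros Hx Hn. unfold beatty.
  pose proof (rfloor_spec (IZR n * x)). pose proof (rfloor_spec (IZR n' * x)).
  assert (1 <= IZR n' - IZR n) by (rewrite <- minus_IZR; apply IZR_le; lia).
  assert (1 * 1 <= (IZR n' - IZR n) * x) by (apply Rmult_le_compat; lra).
  apply lt_IZR. lra.
Qed.

Lemma beatty_inj x n n' : 1 <= x -> beatty x n = beatty x n' -> n = n'.
Proof.
  intros Hx E. destruct (Z.lt_trichotomy n n') as [L|[L|L]]; [|exact L|];
  apply (beatty_lt_mono x _ _ Hx) in L; lia.
Qed.

Section Beatty.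

Variables alpha beta : R.
Hypothesis alpha_pos : 0 < alpha.
Hypothesis beta_pos : 0 < beta.
Hypothesis inv_add : / alpha + / beta = 1.
Hypothesis alpha_irrational : irrational alpha.
Hypothesis beta_irrational : irrational beta.

Lemma beatty_disjoint p q : (0 < p)%Z -> (0 < q)%Z -> beatty alpha p <> beatty beta q.
Proof.
  intros Hp Hq E.
  destruct (beatty_bounds alpha p (alpha_irrational p Hp)) as [Hp1 Hp2].
  destruct (beatty_bounds beta q (beta_irrational q Hq)) as [Hq1 Hq2].
  rewrite E in Hp1, Hp2. set (m := IZR (beatty beta q)) in *.
  rewrite <- mul_inv_lt_iff in Hp1 by exact alpha_pos.
  rewrite <- lt_mul_inv_iff in Hp2 by exact alpha_pos.
  rewrite <- mul_inv_lt_iff in Hq1 by exact beta_pos.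
  rewrite <- lt_mul_inv_iff in Hq2 by exact beta_pos.
  assert (Hsum : m < IZR (p + q) < m + 1).
  { rewrite plus_IZR. split; nra. }
  unfold m in Hsum. destruct Hsum as [H1 H2].
  apply lt_IZR in H1. rewrite <- plus_IZR in H2. apply lt_IZR in H2. lia.
Qed.

Lemma beatty_cover m : (0 < m)%Z ->
  (exists p, (0 < p)%Z /\ beatty alpha p = m) \/ (exists q, (0 < q)%Z /\ beatty beta q = m).
Proof.
  intros Hm.
  assert (HmR : 1 <= IZR m) by (apply IZR_le; lia).
  set (x := IZR (m + 1) * / alpha). set (y := IZR (m + 1) * / beta).
  assert (Hxy : x + y = IZR m + 1).
  { unfold x, y. rewrite <- Rmult_plus_distr_l, inv_add, plus_IZR. ring. }
  pose proof (irrational_inv alpha alpha_pos alpha_irrational (m + 1)%Z ltac:(lia)) as Hx.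
  pose proof (irrational_inv beta beta_pos beta_irrational (m + 1)%Z ltac:(lia)) as Hy.
  set (p := rfloor x). set (q := rfloor y).
  assert (Hp : IZR p < x < IZR p + 1) by (split; [now apply rfloor_lt | apply rfloor_spec]).
  assert (Hq : IZR q < y < IZR q + 1) by (split; [now apply rfloor_lt | apply rfloor_spec]).
  assert (Hpq : q = (m - p)%Z).
  { assert (p + q < m + 1)%Z by (apply lt_IZR; rewrite !plus_IZR; lra).
    assert (m + 1 < p + q + 2)%Z by (apply lt_IZR; rewrite !plus_IZR; lra).
    lia. }
  destruct (Rle_or_lt (IZR m) (IZR p * alpha)) as [Hle|Hlt].
  - left. exists p.
    assert (Hup : IZR p * alpha < IZR m + 1).
    { rewrite <- plus_IZR, <- lt_mul_inv_iff by exact alpha_pos. apply Hp. }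
    split; [apply lt_IZR; nra | now apply rfloor_unique].
  - right. exists q.
    rewrite <- lt_mul_inv_iff in Hlt by exact alpha_pos.
    assert (Hlow : IZR m * / beta < IZR q).
    { rewrite Hpq, minus_IZR.
      replace (/ beta) with (1 - / alpha) by lra. lra. }
    assert (Hup : IZR q * beta < IZR m + 1).
    { rewrite <- plus_IZR, <- lt_mul_inv_iff by exact beta_pos. apply Hq. }
    rewrite mul_inv_lt_iff in Hlow by exact beta_pos.
    split; [apply lt_IZR; nra | apply rfloor_unique; lra].
Qed.

End Beatty.

Lemma phi_bounds : 8 / 5 < phi < 5 / 3.
Proof.
  pose proof (sqrt_sqrt 5 ltac:(lra)). pose proof (sqrt_pos 5).
  unfold phi. split; nra.
Qed.

Lemma phi_sq : phi * phi = phi + 1.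
Proof. pose proof (sqrt_sqrt 5 ltac:(lra)). unfold phi. nra. Qed.

Lemma phi_irrational : irrational phi.
Proof.
  intros n Hn. assert (Hn0 : (0 <= n)%Z) by lia. revert Hn.
  pattern n. apply Z_lt_induction; [|exact Hn0]. clear n Hn0.
  (* Descent: n phi = k forces (k - n) phi = n with 0 < k - n < n. *)
  intros n IH Hn k E. pose proof phi_bounds.
  assert (Hnk : (n < k < 2 * n)%Z).
  { assert (0 < IZR n) by (apply IZR_lt; lia).
    split; apply lt_IZR; rewrite <- E; [|rewrite mult_IZR]; nra. }
  apply (IH (k - n)%Z ltac:(lia) ltac:(lia) n).
  rewrite minus_IZR, <- E, Rmult_minus_distr_r, Rmult_assoc, phi_sq. ring.
Qed.

Lemma phi_inv_add : / phi + / (phi * phi) = 1.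
Proof.
  pose proof phi_bounds. pose proof phi_sq.
  field_simplify_eq; [simpl; lra | lra].
Qed.

Lemma phi_sq_irrational : irrational (phi * phi).
Proof.
  intros n Hn k E. apply (phi_irrational n Hn (k - n)%Z).
  rewrite minus_IZR, <- E, phi_sq. ring.
Qed.

Definition A (n : Z) : Z := beatty phi n.
Definition B (n : Z) : Z := (A n + n)%Z.

Lemma beatty_phi_sq n : beatty (phi * phi) n = B n.
Proof.
  unfold beatty, B, A. rewrite phi_sq, Rmult_plus_distr_l, Rmult_1_r.
  apply rfloor_add_IZR.
Qed.

Lemma A_neq_B p q : (0 < p)%Z -> (0 < q)%Z -> A p <> B q.
Proof.
  pose proof phi_bounds. rewrite <- beatty_phi_sq.
  apply beatty_disjoint; [lra | nra | exact phi_inv_add | exact phi_irrational | exact phi_sq_irrational].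
Qed.

Lemma A_or_B m : (0 < m)%Z ->
  (exists p, (0 < p)%Z /\ A p = m) \/ (exists q, (0 < q)%Z /\ B q = m).
Proof.
  pose proof phi_bounds. intros Hm.
  destruct (beatty_cover phi (phi * phi)) with (m := m) as [HA|[q [Hq E]]];
    [lra | nra | exact phi_inv_add | exact phi_irrational | exact phi_sq_irrational | exact Hm | | ].
  - left. exact HA.
  - right. exists q. rewrite <- beatty_phi_sq. now split.
Qed.

Lemma A_inj n n' : A n = A n' -> n = n'.
Proof. pose proof phi_bounds. apply beatty_inj. lra. Qed.

Lemma A_ge n : (0 <= n)%Z -> (n <= A n)%Z.
Proof.
  intros Hn. pose proof phi_bounds. apply rfloor_ge.
  assert (0 <= IZR n) by (apply IZR_le; exact Hn). nra.
Qed.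

Lemma A_pos n : (0 < n)%Z -> (0 < A n)%Z.
Proof. intros Hn. pose proof (A_ge n). lia. Qed.

Lemma B_pos n : (0 < n)%Z -> (0 < B n)%Z.
Proof. intros Hn. pose proof (A_pos n). unfold B. lia. Qed.

(* For a = A n and x = n, the term x * phi - a is the fractional part of n * phi. *)
Lemma mul_phi_decomp a x : a * phi = a + x - (x * phi - a) * (phi - 1).
Proof.
  replace (a + x - (x * phi - a) * (phi - 1)) with (a * phi + x * (phi + 1) - x * (phi * phi)) by ring.
  rewrite phi_sq. ring.
Qed.

Lemma A_frac n : (0 < n)%Z -> 0 < IZR n * phi - IZR (A n) < 1.
Proof. intros Hn. pose proof (beatty_bounds phi n (phi_irrational n Hn)). unfold A. lra. Qed.

Lemma A_A n : (0 < n)%Z -> A (A n) = (B n - 1)%Z.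
Proof.
  intros Hn. pose proof phi_bounds. pose proof (A_frac n Hn) as Ht.
  set (t := IZR n * phi - IZR (A n)) in *.
  assert (0 < t * (phi - 1) < 1) by nra.
  unfold A at 1, beatty. apply rfloor_unique.
  rewrite (mul_phi_decomp _ (IZR n)). fold t. unfold B. rewrite minus_IZR, plus_IZR. lra.
Qed.

Lemma A_B n : (0 < n)%Z -> A (B n) = (A n + B n)%Z.
Proof.
  intros Hn. pose proof phi_bounds. pose proof (A_frac n Hn) as Ht.
  set (t := IZR n * phi - IZR (A n)) in *.
  assert (0 < t * (2 - phi) < 1) by nra.
  assert (Et : IZR n * phi = IZR (A n) + t) by (unfold t; ring).
  unfold A at 1, beatty. apply rfloor_unique. unfold B.
  rewrite !plus_IZR, Rmult_plus_distr_r, (mul_phi_decomp _ (IZR n)), Et. fold t. nra.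
Qed.

Lemma A_B_linear n : (0 < n)%Z -> A (B n) = (2 * A n + n)%Z.
Proof. intros Hn. rewrite A_B by exact Hn. unfold B. lia. Qed.

Lemma A_A_A_linear n : (0 < n)%Z -> A (A (A n)) = (2 * A n + n - 2)%Z.
Proof.
  intros Hn. rewrite A_A by (apply A_pos; exact Hn).
  unfold B at 1. rewrite A_A by exact Hn. unfold B. lia.
Qed.

Lemma A_A_B_linear n : (0 < n)%Z -> A (A (B n)) = (3 * A n + 2 * n - 1)%Z.
Proof.
  intros Hn. rewrite A_A by (apply B_pos; exact Hn).
  unfold B at 1. rewrite A_B by exact Hn. unfold B. lia.
Qed.

Lemma rfloor_phi_pred_A j c : (0 < j)%Z ->
  rfloor ((phi - 1) * IZR (A j) + IZR c) = (j - 1 + c)%Z.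
Proof.
  intros Hj.
  replace ((phi - 1) * IZR (A j) + IZR c) with (IZR (A j) * phi - IZR (A j) + IZR c) by ring.
  rewrite rfloor_add_IZR, rfloor_sub_IZR.
  change (rfloor (IZR (A j) * phi)) with (A (A j)).
  rewrite A_A by exact Hj. unfold B. lia.
Qed.

Lemma Rij_iff i j m : Rij i j m <-> exists n : Z, (0 < n)%Z /\
  m = (Z.of_nat (fib (i + 1)) * A n + Z.of_nat (fib i) * n - j)%Z.
Proof.
  unfold Rij, A, beatty. split.
  - intros [n [Hn ->]]. exists (Z.of_nat n). split; [lia|].
    now rewrite <- INR_IZR_INZ.
  - intros [n [Hn ->]]. exists (Z.to_nat n). split; [lia|].
    now rewrite INR_IZR_INZ, Z2Nat.id by lia.
Qed.

Lemma Rij_image i j (f : Z -> Z) :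
  (forall n, (0 < n)%Z -> f n = (Z.of_nat (fib (i + 1)) * A n + Z.of_nat (fib i) * n - j)%Z) ->
  forall m, Rij i j m <-> exists n, (0 < n)%Z /\ m = f n.
Proof.
  intros Hf m. rewrite Rij_iff.
  split; intros [n [Hn ->]]; exists n; rewrite Hf; auto.
Qed.

Lemma Rij_1_0 : forall m, Rij 1 0 m <-> exists n, (0 < n)%Z /\ m = B n.
Proof. apply Rij_image. intros n _. unfold B. cbn [fib Nat.add]. lia. Qed.

Lemma Rij_2_0 : forall m, Rij 2 0 m <-> exists n, (0 < n)%Z /\ m = A (B n).
Proof. apply Rij_image. intros n Hn. rewrite A_B_linear by exact Hn. cbn [fib Nat.add]. lia. Qed.

Lemma Rij_2_2 : forall m, Rij 2 2 m <-> exists n, (0 < n)%Z /\ m = A (A (A n)).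
Proof. apply Rij_image. intros n Hn. rewrite A_A_A_linear by exact Hn. cbn [fib Nat.add]. lia. Qed.

Lemma Rij_3_1 : forall m, Rij 3 1 m <-> exists n, (0 < n)%Z /\ m = A (A (B n)).
Proof. apply Rij_image. intros n Hn. rewrite A_A_B_linear by exact Hn. cbn [fib Nat.add]. lia. Qed.

Lemma wythoff_pieces_ind (P : Z -> Prop) :
  (forall n, (0 < n)%Z -> P (A (B n))) ->
  (forall n, (0 < n)%Z -> P (B n)) ->
  (forall n, (0 < n)%Z -> P (A (A (A n)))) ->
  (forall n, (0 < n)%Z -> P (A (A (B n)))) ->
  forall m, posZ m -> P m.
Proof.
  intros HAB HB HAAA HAAB m Hm.
  destruct (A_or_B m Hm) as [[k [Hk <-]]|[n [Hn <-]]]; [|auto].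
  destruct (A_or_B k Hk) as [[j [Hj <-]]|[n [Hn <-]]]; [|auto].
  destruct (A_or_B j Hj) as [[n [Hn <-]]|[n [Hn <-]]]; auto.
Qed.

Lemma Rij_pieces_cover m : posZ m -> Rij 2 0 m \/ Rij 1 0 m \/ Rij 2 2 m \/ Rij 3 1 m.
Proof.
  rewrite Rij_2_0, Rij_1_0, Rij_2_2, Rij_3_1.
  revert m. apply wythoff_pieces_ind; intros n Hn; eauto 6.
Qed.

Ltac solve_A_neq_B :=
  let pos := repeat (apply A_pos || apply B_pos); assumption in
  repeat match goal with E : A _ = A _ |- _ => apply A_inj in E end;
  match goal with
  | E : A ?p = B ?q |- _ => exact (A_neq_B p q ltac:(pos) ltac:(pos) E)
  | E : B ?q = A ?p |- _ => exact (A_neq_B p q ltac:(pos) ltac:(pos) (eq_sym E))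
  end.

Lemma Rij_pieces_disjoint :
  (forall m : Z, ~ (Rij 2 0 m /\ Rij 1 0 m)) /\
  (forall m : Z, ~ (Rij 2 0 m /\ Rij 2 2 m)) /\
  (forall m : Z, ~ (Rij 2 0 m /\ Rij 3 1 m)) /\
  (forall m : Z, ~ (Rij 1 0 m /\ Rij 2 2 m)) /\
  (forall m : Z, ~ (Rij 1 0 m /\ Rij 3 1 m)) /\
  (forall m : Z, ~ (Rij 2 2 m /\ Rij 3 1 m)).
Proof.
  setoid_rewrite Rij_2_0; setoid_rewrite Rij_1_0;
    setoid_rewrite Rij_2_2; setoid_rewrite Rij_3_1.
  repeat split; intros m [[n [Hn ->]] [n' [Hn' E]]]; solve_A_neq_B.
Qed.

Lemma Rij_pieces_pos m : Rij 2 0 m \/ Rij 1 0 m \/ Rij 2 2 m \/ Rij 3 1 m -> posZ m.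
Proof.
  rewrite Rij_2_0, Rij_1_0, Rij_2_2, Rij_3_1. unfold posZ.
  intros [[n [Hn ->]]|[[n [Hn ->]]|[[n [Hn ->]]|[n [Hn ->]]]]];
    repeat (apply A_pos || apply B_pos); exact Hn.
Qed.

Lemma A_small_values : A 1 = 1%Z /\ A 2 = 3%Z /\ A 3 = 4%Z /\ A 4 = 6%Z.
Proof.
  pose proof phi_bounds. unfold A, beatty.
  repeat split; apply rfloor_unique; lra.
Qed.

Section Involution.

Variable g : Z -> Z.
Hypothesis g_Rij_2_0 : forall n, posZ n -> Rij 2 0 n -> g n = rfloor (phi * IZR n).
Hypothesis g_Rij_1_0 : forall n, posZ n -> Rij 1 0 n -> g n = rfloor (phi * IZR n - 2).
Hypothesis g_Rij_2_2 : forall n, posZ n -> Rij 2 2 n -> g n = rfloor ((phi - 1) * IZR n + 2).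
Hypothesis g_Rij_3_1 : forall n, posZ n -> Rij 3 1 n -> g n = rfloor ((phi - 1) * IZR n + 1).

Lemma g_B n : (0 < n)%Z -> g (B n) = A (A (A n)).
Proof.
  intros Hn. rewrite g_Rij_1_0 by (apply B_pos + apply Rij_1_0; eauto).
  rewrite Rmult_comm, rfloor_sub_IZR.
  change (rfloor (IZR (B n) * phi)) with (A (B n)).
  rewrite A_B_linear, A_A_A_linear by exact Hn. lia.
Qed.

Lemma g_A_A_A n : (0 < n)%Z -> g (A (A (A n))) = B n.
Proof.
  intros Hn. pose proof (A_pos _ (A_pos _ Hn)).
  rewrite g_Rij_2_2 by (apply A_pos + apply Rij_2_2; eauto).
  rewrite rfloor_phi_pred_A, A_A by assumption. lia.
Qed.

Lemma g_A_B n : (0 < n)%Z -> g (A (B n)) = A (A (B n)).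
Proof.
  intros Hn. rewrite g_Rij_2_0 by (apply A_pos, B_pos + apply Rij_2_0; eauto).
  now rewrite Rmult_comm.
Qed.

Lemma g_A_A_B n : (0 < n)%Z -> g (A (A (B n))) = A (B n).
Proof.
  intros Hn. pose proof (A_pos _ (B_pos _ Hn)).
  rewrite g_Rij_3_1 by (apply A_pos + apply Rij_3_1; eauto).
  rewrite rfloor_phi_pred_A by assumption. lia.
Qed.

Lemma g_involutive : forall n, posZ n -> g (g n) = n.
Proof.
  apply wythoff_pieces_ind; intros n Hn.
  - now rewrite g_A_B, g_A_A_B.
  - now rewrite g_B, g_A_A_A.
  - now rewrite g_A_A_A, g_B.
  - now rewrite g_A_A_B, g_A_B.
Qed.

Lemma g_pos : forall n, posZ n -> posZ (g n).
Proof.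
  apply wythoff_pieces_ind; intros n Hn;
    [rewrite g_A_B | rewrite g_B | rewrite g_A_A_A | rewrite g_A_A_B]; try exact Hn;
    unfold posZ; repeat (apply A_pos || apply B_pos); exact Hn.
Qed.

Lemma g_first_values :
  g 1%Z = 2%Z /\ g 2%Z = 1%Z /\ g 3%Z = 4%Z /\ g 4%Z = 3%Z /\ g 5%Z = 6%Z /\
  g 6%Z = 5%Z /\ g 7%Z = 9%Z /\ g 8%Z = 12%Z /\ g 9%Z = 7%Z /\ g 10%Z = 14%Z.
Proof.
  destruct A_small_values as (A1 & A2 & A3 & A4).
  pose proof (g_A_A_A 1%Z ltac:(lia)) as g1. pose proof (g_B 1%Z ltac:(lia)) as g2.
  pose proof (g_A_B 1%Z ltac:(lia)) as g3. pose proof (g_A_A_B 1%Z ltac:(lia)) as g4.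
  pose proof (g_B 2%Z ltac:(lia)) as g5. pose proof (g_A_A_A 2%Z ltac:(lia)) as g6.
  pose proof (g_B 3%Z ltac:(lia)) as g7. pose proof (g_A_B 2%Z ltac:(lia)) as g8.
  pose proof (g_A_A_A 3%Z ltac:(lia)) as g9. pose proof (g_B 4%Z ltac:(lia)) as g10.
  rewrite ?A_A_B_linear, ?A_A_A_linear, ?A_B_linear in * by lia.
  unfold B in *. rewrite ?A1, ?A2, ?A3, ?A4 in *.
  repeat split; assumption.
Qed.

End Involution.

Theorem theorem4p2 :
  (* the four pieces form a partition of N *)
  (forall m : Z, posZ m ->
     Rij 2%nat 0%Z m \/ Rij 1%nat 0%Z m \/ Rij 2%nat 2%Z m \/ Rij 3%nat 1%Z m) /\
  (forall m : Z, ~ (Rij 2%nat 0%Z m /\ Rij 1%nat 0%Z m)) /\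
  (forall m : Z, ~ (Rij 2%nat 0%Z m /\ Rij 2%nat 2%Z m)) /\
  (forall m : Z, ~ (Rij 2%nat 0%Z m /\ Rij 3%nat 1%Z m)) /\
  (forall m : Z, ~ (Rij 1%nat 0%Z m /\ Rij 2%nat 2%Z m)) /\
  (forall m : Z, ~ (Rij 1%nat 0%Z m /\ Rij 3%nat 1%Z m)) /\
  (forall m : Z, ~ (Rij 2%nat 2%Z m /\ Rij 3%nat 1%Z m)) /\
  (* every piece lies inside N *)
  (forall m : Z, (Rij 2%nat 0%Z m \/ Rij 1%nat 0%Z m \/ Rij 2%nat 2%Z m \/ Rij 3%nat 1%Z m) -> posZ m) /\
  (* the function g defined piecewise has the claimed properties *)
  (forall g : Z -> Z,
     (forall n, posZ n -> Rij 2%nat 0%Z n -> g n = rfloor (phi * IZR n)) ->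
     (forall n, posZ n -> Rij 1%nat 0%Z n -> g n = rfloor (phi * IZR n - 2)) ->
     (forall n, posZ n -> Rij 2%nat 2%Z n -> g n = rfloor ((phi - 1) * IZR n + 2)) ->
     (forall n, posZ n -> Rij 3%nat 1%Z n -> g n = rfloor ((phi - 1) * IZR n + 1)) ->
     (* g maps N to N bijectively *)
     (forall n, posZ n -> posZ (g n)) /\
     (forall n m, posZ n -> posZ m -> g n = g m -> n = m) /\
     (forall m, posZ m -> exists n, posZ n /\ g n = m) /\
     (* order 2: g o g = id <> g *)
     (forall n, posZ n -> g (g n) = n) /\
     (exists n, posZ n /\ g n <> n) /\
     (* first values *)
     g 1%Z = 2%Z /\ g 2%Z = 1%Z /\ g 3%Z = 4%Z /\ g 4%Z = 3%Z /\ g 5%Z = 6%Z /\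
     g 6%Z = 5%Z /\ g 7%Z = 9%Z /\ g 8%Z = 12%Z /\ g 9%Z = 7%Z /\ g 10%Z = 14%Z).
Proof.
  destruct Rij_pieces_disjoint as (D1 & D2 & D3 & D4 & D5 & D6).
  split; [exact Rij_pieces_cover|].
  do 6 (split; [assumption|]).
  split; [exact Rij_pieces_pos|].
  intros g h20 h10 h22 h31.
  pose proof (g_pos g h20 h10 h22 h31) as Hpos.
  pose proof (g_involutive g h20 h10 h22 h31) as Hinv.
  destruct (g_first_values g h20 h10 h22 h31) as [g1 Hvalues].
  split; [exact Hpos|].
  split.
  { intros n m Hn Hm E. now rewrite <- (Hinv n Hn), <- (Hinv m Hm), E. }
  split.
  { intros m Hm. exists (g m). split; [exact (Hpos m Hm) | exact (Hinv m Hm)]. }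
  split; [exact Hinv|].
  split.
  { exists 1%Z. split; [unfold posZ; lia | rewrite g1; discriminate]. }
  exact (conj g1 Hvalues).
Qed.
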